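(* Let $k\ge 2$ and $n\ge 3$ be integers and $\ell\ge 0$. Let ${\sf S}^{(c)}_k(n,\ell)$ denote the number of circular $k$-noncrossing RNA structures on $\{1,\dots,n\}$ with exactly $\ell$ isolated vertices, ${\sf S}^{(c)}_k(n)=\sum_\ell {\sf S}^{(c)}_k(n,\ell)$, and $f_k(m,\ell)$ the number of $k$-noncrossing digraphs on $\{1,\dots,m\}$ with exactly $\ell$ isolated vertices ($f_k(m,\ell)=0$ if $\ell>m$). Then $$ {\sf S}^{(c)}_k(n,\ell)=\sum_{b=0}^{\lfloor (n-\ell)/2\rfloor}(-1)^b\left[\binom{(n-2)-(b-1)}{b-1}+\binom{n-b}{b}\right]f_k(n-2b,\ell), $$ and $$ {\sf S}^{(c)}_k(n)=\sum_{b=0}^{\lfloor n/2\rfloor}(-1)^b\left[\binom{(n-2)-(b-1)}{b-1}+\binom{n-b}{b}\right]\left\{\sum_{\ell=0}^{n-2b}f_k(n-2b,\ell)\right\}, $$ where $\binom{m}{-1}:=0$ and $\binom{m}{r}:=0$ if $0\le m<r$.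
   Context: A digraph on $\{1,\dots,n\}$ is a set of arcs $(i,j)$ with $1\le i<j\le n$. It is $k$-noncrossing if every vertex lies in at most one arc and there are no $k$ arcs $(i_1,j_1),\dots,(i_k,j_k)$ with $i_1<\dots<i_k<j_1<\dots<j_k$. A vertex is isolated if it lies in no arc. A circular $k$-noncrossing RNA structure on $\{1,\dots,n\}$ is a $k$-noncrossing digraph containing no arc of the form $(i,i+1)$, $1\le i\le n-1$, and no arc $(1,n)$ (i.e. no $1$-arc with indices taken modulo $n$). *)

From mathcomp Require Import all_boot all_order all_algebra.
Set Implicit Arguments. Unset Strict Implicit. Unset Printing Implicit Defensive.
Import GRing.Theory Num.Theory.

(* Vertices {1,...,n} are represented by 'I_n (vertex v+1 <-> ordinal v).
   A graph on {1..n} is a finite set of arcs (pairs of vertices). *)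
Definition arc n := ('I_n * 'I_n)%type.

Definition is_digraph n (G : {set arc n}) : bool :=
  [forall a in G, (a.1 < a.2)%N].

Definition deg_le1 n (G : {set arc n}) : bool :=
  [forall a in G, forall b in G, (a != b) ==>
     [&& a.1 != b.1, a.1 != b.2, a.2 != b.1 & a.2 != b.2]].

(* there exist k arcs (i_1,j_1),...,(i_k,j_k) of G with
   i_1 < ... < i_k < j_1 < ... < j_k *)
Definition has_k_crossing n k (G : {set arc n}) : bool :=
  [exists f : {ffun 'I_k -> arc n},
    [forall t, f t \in G] &&
    [forall s : 'I_k, forall t : 'I_k,
       [&& (s < t)%N ==> ((f s).1 < (f t).1)%N && ((f s).2 < (f t).2)%N
         & ((f s).1 < (f t).2)%N]]].

Definition k_noncrossing n k (G : {set arc n}) : bool :=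
  [&& is_digraph G, deg_le1 G & ~~ has_k_crossing k G].

Definition n_isolated n (G : {set arc n}) : nat :=
  #|[set v : 'I_n | [forall a in G, (a.1 != v) && (a.2 != v)]]|.

Definition no_one_arc_circ n (G : {set arc n}) : bool :=
  [forall a in G, (a.2 != a.1 .+1 :> nat) && ~~ ((a.1 == 0 :> nat) && (a.2 == n.-1 :> nat))].

Definition circ_RNA n k (G : {set arc n}) : bool :=
  k_noncrossing k G && no_one_arc_circ G.

Definition f_count k m l : nat :=
  #|[set G : {set arc m} | k_noncrossing k G && (n_isolated G == l)]|.

Definition Sc k n l : nat :=
  #|[set G : {set arc n} | circ_RNA k G && (n_isolated G == l)]|.

(* S^(c)_k(n) = sum_l S^(c)_k(n,l)  (terms with l > n vanish) *)
Definition Sc_total k n : nat := \sum_(l < n.+1) Sc k n l.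

(* binom((n-2)-(b-1), b-1) + binom(n-b, b), with binom(m,-1) = 0 *)
Definition coef n b : nat :=
  (if b is b'.+1 then 'C(n - 2 - b', b') else 0) + 'C(n - b, b).

(* Let P_j(n, l) count the k-noncrossing digraphs on n vertices with l isolated
   vertices and no 1-arc starting at one of the first j vertices, so P_0 = f_k.
   The arc (j+1, j+2) crosses no other arc, and deleting it together with its
   endpoints preserves k-noncrossingness and the isolated vertices; sorting by
   whether it is present gives P_j(n) = P_(j+1)(n) + P_(j-1)(n-2), which unfolds
   by Pascal's rule to P_j(n, l) = sum_b (-1)^b C(j+1-b, b) f_k(n-2b, l).  In the
   same way the arc (1, n) encloses all other vertices, and deleting it shows
   S^(c)_k(n) = P_(n-1)(n) - P_(n-3)(n-2); the difference of the two alternating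
   sums has the stated coefficients. *)

From mathcomp Require Import all_boot all_order all_algebra.
From mathcomp Require Import zify ring.
Set Implicit Arguments. Unset Strict Implicit. Unset Printing Implicit Defensive.
Import GRing.Theory.

Definition k_crossing n k (f : 'I_k -> arc n) : bool :=
  [forall s : 'I_k, forall t : 'I_k,
     [&& (s < t)%N ==> ((f s).1 < (f t).1)%N && ((f s).2 < (f t).2)%N
       & ((f s).1 < (f t).2)%N]].

Lemma eq_k_crossing n k (f g : 'I_k -> arc n) : f =1 g -> k_crossing f = k_crossing g.
Proof. by move=> fg; apply: eq_forallb => s; apply: eq_forallb => t; rewrite !fg. Qed.

Lemma has_k_crossingE n k (G : {set arc n}) :
  has_k_crossing k G = [exists f : {ffun 'I_k -> arc n}, [forall t, f t \in G] && k_crossing f].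
Proof. by []. Qed.

Definition crosses n (a b : arc n) : bool :=
  [&& (a.1 < b.1)%N, (b.1 < a.2)%N & (a.2 < b.2)%N].

Lemma k_crossing_crosses n k (f : 'I_k -> arc n) (s t : 'I_k) :
  k_crossing f -> (s < t)%N -> crosses (f s) (f t).
Proof.
move=> /forallP cf st; move: (forallP (cf s) t) (forallP (cf t) s).
by rewrite st /crosses => /andP[/andP[-> ->] _] /andP[_ ->].
Qed.

Lemma deg_le1P n (G : {set arc n}) :
  reflect (forall a b, a \in G -> b \in G -> a != b ->
     [&& a.1 != b.1, a.1 != b.2, a.2 != b.1 & a.2 != b.2]) (deg_le1 G).
Proof.
apply: (iffP forall_inP) => H.
  by move=> a b aG bG ab; move/forall_inP: (H a aG) => /(_ b bG) /implyP; apply.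
by move=> a aG; apply/forall_inP => b bG; apply/implyP; apply: H.
Qed.

Definition knc_count k n l (R : pred (arc n)) : nat :=
  #|[set G : {set arc n} | [&& k_noncrossing k G, n_isolated G == l & [forall a in G, R a]]]|.

Lemma eq_knc_count k n l (R R' : pred (arc n)) :
  (forall a : arc n, (a.1 < a.2)%N -> R a = R' a) -> knc_count k l R = knc_count k l R'.
Proof.
move=> RR'; apply: eq_card => G; rewrite !inE.
case kG: (k_noncrossing k G) => //=; congr (_ && _).
case/and3P: kG => /forall_inP dG _ _.
by apply: eq_forallb_in => a /dG; apply: RR'.
Qed.

Lemma forall_in_andneq (T : finType) (A : {set T}) (R : pred T) e :
  [forall a in A, R a && (a != e)] = [forall a in A, R a] && (e \notin A).
Proof.
apply/forall_inP/andP => [H | [/forall_inP RA eA] a aA].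
  split; first by apply/forall_inP => a /H /andP[].
  by apply/negP => /H; rewrite eqxx andbF.
by rewrite RA //; apply: contraNneq eA => <-.
Qed.

Lemma knc_count_split k n l (R : pred (arc n)) e :
  knc_count k l R =
  (#|[set G : {set arc n} |
       [&& k_noncrossing k G, n_isolated G == l, [forall a in G, R a] & e \in G]]|
   + knc_count k l [pred a | R a && (a != e)])%N.
Proof.
rewrite /knc_count -(cardsID [set G : {set arc n} | e \in G]).
by congr addn; apply: eq_card => G; rewrite !inE ?forall_in_andneq;
  [rewrite -!andbA | rewrite andbC -!andbA].
Qed.

Lemma knc_count_predT k n l : knc_count k l (@predT (arc n)) = f_count k n l.
Proof.
apply: eq_card => G; rewrite !inE.
have -> : [forall a in G, predT a] by apply/forall_inP.
by rewrite andbT.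
Qed.

Lemma Sc_knc_count k n l :
  Sc k n l = knc_count k l
    [pred a : arc n | (a.2 != a.1.+1 :> nat) && ~~ ((a.1 == 0 :> nat) && (a.2 == n.-1 :> nat))].
Proof. by apply: eq_card => G; rewrite !inE /circ_RNA -andbA [no_one_arc_circ G && _]andbC. Qed.

Lemma f_count_gt k m l : (m < l)%N -> f_count k m l = 0%N.
Proof.
move=> ml; apply: eq_card0 => G; rewrite !inE.
have : (n_isolated G <= m)%N by rewrite /n_isolated -[X in (_ <= X)%N]card_ord max_card.
by case: eqP => [->|_]; [lia | rewrite andbF].
Qed.

Section ArcInsertion.

Variables (m : nat) (p q : 'I_m.+2).

(* The increasing enumeration of ['I_m.+2] minus [p] and [q], when [p < q]. *)
Definition skip2 (v : 'I_m) : 'I_m.+2 := inord (v + (p <= v) + (q <= v.+1))%N.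

Lemma skip2E v : skip2 v = (v + (p <= v) + (q <= v.+1))%N :> nat.
Proof. by rewrite inordK //; have := ltn_ord v; lia. Qed.

Lemma ltn_skip2 x y : (skip2 x < skip2 y)%N = (x < y)%N.
Proof. by rewrite !skip2E; lia. Qed.

Lemma skip2_inj : injective skip2.
Proof. by move=> x y /(congr1 val) /=; rewrite !skip2E => e; apply: val_inj => /=; lia. Qed.

Definition skip2_arc (a : arc m) : arc m.+2 := (skip2 a.1, skip2 a.2).

Lemma skip2_arc_inj : injective skip2_arc.
Proof. by move=> [a1 a2] [b1 b2] [/skip2_inj -> /skip2_inj ->]. Qed.

Definition ins_arc (G : {set arc m}) : {set arc m.+2} := skip2_arc @: G :|: [set (p, q)].

Lemma pq_in_ins_arc G : (p, q) \in ins_arc G.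
Proof. by rewrite !inE eqxx orbT. Qed.

Hypothesis p_lt_q : (p < q)%N.

Lemma skip2_neq_p v : skip2 v != p.
Proof. by apply/eqP => /(congr1 val) /=; rewrite skip2E; lia. Qed.

Lemma skip2_neq_q v : skip2 v != q.
Proof. by apply/eqP => /(congr1 val) /=; rewrite skip2E; lia. Qed.

Lemma skip2_onto v : v != p -> v != q -> exists w, skip2 w = v.
Proof.
move=> /eqP vp /eqP vq.
have {}vp : v <> p :> nat by move=> e; apply/vp/val_inj.
have {}vq : v <> q :> nat by move=> e; apply/vq/val_inj.
have w_lt : (v - (p < v) - (q < v) < m)%N by have := ltn_ord v; have := ltn_ord q; lia.
by exists (Ordinal w_lt); apply: val_inj => /=; rewrite skip2E /=; lia.
Qed.

Lemma skip2_arc_neq_pq a : skip2_arc a != (p, q).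
Proof. by rewrite xpair_eqE negb_and skip2_neq_p. Qed.

Lemma mem_ins_arc G a : (skip2_arc a \in ins_arc G) = (a \in G).
Proof.
by rewrite !inE (negbTE (skip2_arc_neq_pq a)) orbF (mem_imset _ _ skip2_arc_inj).
Qed.

Lemma ins_arc_inj : injective ins_arc.
Proof. by move=> G1 G2 e; apply/setP => a; rewrite -!mem_ins_arc e. Qed.

Lemma ins_arc_preim G :
  deg_le1 G -> (p, q) \in G -> G = ins_arc [set a | skip2_arc a \in G].
Proof.
move=> /deg_le1P dG pqG; apply/setP => a.
have [->|apq] := eqVneq a (p, q); first by rewrite pqG pq_in_ins_arc.
rewrite !inE (negbTE apq) orbF; apply/idP/imsetP => [aG | [b]]; last by rewrite inE => bG ->.
case/and4P: (dG _ _ aG pqG apq) => /= a1p a1q a2p a2q.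
have [[w1 e1] [w2 e2]] := (skip2_onto a1p a1q, skip2_onto a2p a2q).
by exists (w1, w2); rewrite ?inE /skip2_arc /= e1 e2 -?surjective_pairing.
Qed.

Lemma is_digraph_ins_arc G : is_digraph (ins_arc G) = is_digraph G.
Proof.
apply/forall_inP/forall_inP => dG a.
  by move=> aG; have := dG (skip2_arc a); rewrite mem_ins_arc /= ltn_skip2; apply.
by rewrite !inE => /orP[/imsetP[b /dG bG ->] | /eqP ->] //=; rewrite ltn_skip2.
Qed.

Lemma deg_le1_ins_arc G : deg_le1 (ins_arc G) = deg_le1 G.
Proof.
apply/deg_le1P/deg_le1P => dG.
  move=> a b aG bG ab; have := dG (skip2_arc a) (skip2_arc b).
  by rewrite !mem_ins_arc /= !(inj_eq skip2_inj) (inj_eq skip2_arc_inj); apply.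
move=> a b; rewrite !inE => /orP[/imsetP[a' aG ->] | /eqP ->]
  /orP[/imsetP[b' bG ->] | /eqP ->] //=.
- by rewrite (inj_eq skip2_arc_inj) !(inj_eq skip2_inj); apply: dG.
- by rewrite !skip2_neq_p !skip2_neq_q.
- by rewrite ![p == _]eq_sym ![q == _]eq_sym !skip2_neq_p !skip2_neq_q.
- by rewrite eqxx.
Qed.

Lemma n_isolated_ins_arc G : n_isolated (ins_arc G) = n_isolated G.
Proof.
rewrite /n_isolated -(card_imset _ skip2_inj); apply: eq_card => v; rewrite inE.
apply/forall_inP/imsetP => [isoG | [w]].
  have /andP[/= pv qv] := isoG _ (pq_in_ins_arc G).
  rewrite eq_sym in pv; rewrite eq_sym in qv.
  have [w ew] := skip2_onto pv qv; subst v.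
  exists w => //; rewrite inE; apply/forall_inP => a aG.
  by have := isoG (skip2_arc a); rewrite mem_ins_arc /= !(inj_eq skip2_inj); apply.
rewrite inE => /forall_inP isoG -> a; rewrite !inE => /orP[/imsetP[b bG ->] | /eqP ->] /=.
  by rewrite !(inj_eq skip2_inj); apply: isoG.
by rewrite ![p == _]eq_sym ![q == _]eq_sym skip2_neq_p skip2_neq_q.
Qed.

(* Either no vertex or every other vertex lies strictly between [p] and [q],
   so no arc avoiding [p] and [q] crosses [(p, q)]. *)
Hypothesis pq_nested : (q == p.+1 :> nat) || (p == 0 :> nat) && (q == m.+1 :> nat).

Lemma skip2_between x y : (p < skip2 x < q)%N = (p < skip2 y < q)%N.
Proof. by rewrite !skip2E; have := ltn_ord x; have := ltn_ord y; lia. Qed.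

Lemma not_crosses_pq a : ~~ crosses (skip2_arc a) (p, q) && ~~ crosses (p, q) (skip2_arc a).
Proof. by have := skip2_between a.1 a.2; rewrite /crosses /=; lia. Qed.

Variable k : nat.

Lemma k_crossing_skip2 (f : 'I_k -> arc m) :
  k_crossing (fun t => skip2_arc (f t)) = k_crossing f.
Proof. by apply: eq_forallb => s; apply: eq_forallb => t; rewrite /= !ltn_skip2. Qed.

Hypothesis k_gt1 : (1 < k)%N.

Lemma k_crossing_avoids_pq G (f : 'I_k -> arc m.+2) :
  (forall t, f t \in ins_arc G) -> k_crossing f -> forall t, f t != (p, q).
Proof.
move=> fG cf t; apply/eqP => ft.
have [s st] : exists s : 'I_k, s != t.
  pose i0 := Ordinal (ltnW k_gt1); pose i1 := Ordinal k_gt1.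
  by have [->|] := eqVneq t i0; [exists i1 | exists i0; rewrite eq_sym].
have : crosses (f s) (f t) || crosses (f t) (f s).
  case: (ltngtP s t) => [lt_st | lt_ts | /val_inj eq_st].
  - by rewrite (k_crossing_crosses cf lt_st).
  - by rewrite (k_crossing_crosses cf lt_ts) orbT.
  - by move: st; rewrite eq_st eqxx.
rewrite ft; move: (fG s); rewrite !inE => /orP[/imsetP[a _ ->] | /eqP ->].
  by case/andP: (not_crosses_pq a) => /negbTE -> /negbTE ->.
by rewrite /crosses ltnn.
Qed.

Lemma has_k_crossing_ins_arc G : has_k_crossing k (ins_arc G) = has_k_crossing k G.
Proof.
rewrite !has_k_crossingE; apply/existsP/existsP.
  case=> f /andP[/forallP fG cf].
  have avoid := k_crossing_avoids_pq fG cf.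
  have pre t : exists a, (a \in G) && (skip2_arc a == f t).
    move: (fG t); rewrite !inE (negbTE (avoid t)) orbF => /imsetP[a aG ->].
    by exists a; rewrite aG eqxx.
  have [g gP] := fin_all_exists pre.
  exists [ffun t => g t]; apply/andP; split.
    by apply/forallP => t; rewrite ffunE; case/andP: (gP t).
  rewrite (@eq_k_crossing _ _ _ g) => [|t]; last by rewrite ffunE.
  rewrite -k_crossing_skip2 (@eq_k_crossing _ _ _ f) // => t.
  by case/andP: (gP t) => _ /eqP.
case=> g /andP[/forallP gG cg].
exists [ffun t => skip2_arc (g t)]; apply/andP; split.
  by apply/forallP => t; rewrite ffunE mem_ins_arc.
rewrite (@eq_k_crossing _ _ _ (fun t => skip2_arc (g t))) ?k_crossing_skip2 // => t.
by rewrite ffunE.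
Qed.

Lemma k_noncrossing_ins_arc G : k_noncrossing k (ins_arc G) = k_noncrossing k G.
Proof. by rewrite /k_noncrossing is_digraph_ins_arc deg_le1_ins_arc has_k_crossing_ins_arc. Qed.

Lemma card_ins_arc (R : pred (arc m.+2)) (R' : pred (arc m)) l :
  R (p, q) -> (forall a : arc m, (a.1 < a.2)%N -> R (skip2_arc a) = R' a) ->
  #|[set G : {set arc m.+2} |
      [&& k_noncrossing k G, n_isolated G == l, [forall a in G, R a] & (p, q) \in G]]|
  = knc_count k l R'.
Proof.
move=> Rpq RR'; rewrite /knc_count -(card_imset _ ins_arc_inj); apply: eq_card => G.
rewrite inE; apply/and4P/imsetP => [[kG iG RG pqG] | [G' ]].
  have /and3P[_ dG _] := kG; move: kG iG RG.
  rewrite (ins_arc_preim dG pqG); set G' := [set a | _] => kG iG /forall_inP RG.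
  exists G' => //; rewrite inE -k_noncrossing_ins_arc -n_isolated_ins_arc kG iG /=.
  case/and3P: kG => /forall_inP dgG _ _; apply/forall_inP => a aG'.
  rewrite -RR' ?RG ?mem_ins_arc //.
  by have := dgG (skip2_arc a); rewrite mem_ins_arc /= ltn_skip2; apply.
rewrite inE => /and3P[kG' iG' /forall_inP R'G'] ->.
rewrite k_noncrossing_ins_arc n_isolated_ins_arc kG' iG' pq_in_ins_arc; split => //.
case/and3P: kG' => /forall_inP dgG' _ _.
apply/forall_inP => a; rewrite !inE => /orP[/imsetP[b bG ->] | /eqP ->] //.
by rewrite RR' ?R'G' ?dgG'.
Qed.

End ArcInsertion.

Definition not_1arc_before n j (a : arc n) : bool := (a.2 != a.1.+1 :> nat) || (j <= a.1)%N.

Definition P_count k n j l : nat := knc_count k l (@not_1arc_before n j).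

Lemma P_count0 k n l : P_count k n 0 l = f_count k n l.
Proof.
by rewrite -knc_count_predT; apply: eq_knc_count => a _; rewrite /not_1arc_before orbT.
Qed.

Lemma P_count_rec k n j l : (1 < k)%N -> (j.+1 < n)%N ->
  P_count k n j l = (P_count k n j.+1 l + P_count k (n - 2) j.-1 l)%N.
Proof.
case: n => [|[|m]] //= k_gt1 lt_jm; rewrite subn2 /=.
pose p : 'I_m.+2 := inord j; pose q : 'I_m.+2 := inord j.+1.
have pE : p = j :> nat by rewrite inordK //; lia.
have qE : q = j.+1 :> nat by rewrite inordK.
have p_lt_q : (p < q)%N by rewrite pE qE.
have pq_nested : (q == p.+1 :> nat) || (p == 0 :> nat) && (q == m.+1 :> nat).
  by rewrite pE qE eqxx.
rewrite /P_count (knc_count_split _ _ _ (p, q)) addnC; congr addn.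
  apply: eq_knc_count => -[x y] _.
  by rewrite /= xpair_eqE -!val_eqE /= pE qE /not_1arc_before /=; lia.
rewrite (card_ins_arc p_lt_q pq_nested k_gt1 (R' := @not_1arc_before m j.-1)) //.
  by rewrite /not_1arc_before /= pE leqnn orbT.
by move=> [x y] /= lt_xy; rewrite /not_1arc_before /= !skip2E pE qE; lia.
Qed.

Lemma Sc_rec k m l : (1 < k)%N -> (0 < m)%N ->
  (Sc k m.+2 l + P_count k m m.-1 l)%N = P_count k m.+2 m.+1 l.
Proof.
move=> k_gt1 m_gt0.
pose p : 'I_m.+2 := inord 0; pose q : 'I_m.+2 := inord m.+1.
have pE : p = 0 :> nat by rewrite inordK.
have qE : q = m.+1 :> nat by rewrite inordK.
have p_lt_q : (p < q)%N by rewrite pE qE.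
have pq_nested : (q == p.+1 :> nat) || (p == 0 :> nat) && (q == m.+1 :> nat).
  by rewrite pE qE !eqxx orbT.
rewrite /P_count [RHS](knc_count_split _ _ _ (p, q)) Sc_knc_count addnC; congr addn.
  rewrite (card_ins_arc p_lt_q pq_nested k_gt1 (R' := @not_1arc_before m m.-1)) //.
    by rewrite /not_1arc_before /= pE qE; lia.
  by move=> [x y] /= lt_xy; rewrite /not_1arc_before /= !skip2E pE qE; have := ltn_ord y; lia.
apply: eq_knc_count => -[x y] _; rewrite /= xpair_eqE -!val_eqE /= pE qE /not_1arc_before /=.
by have := ltn_ord x; have := ltn_ord y; lia.
Qed.

Lemma binS_sub n b : 'C(n.+1 - b, b.+1) = ('C(n - b, b.+1) + 'C(n - b, b))%N.
Proof.
have [le_bn | lt_nb] := leqP b n; first by rewrite subSn // binS.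
have [-> ->] : (n.+1 - b = 0 /\ n - b = 0)%N by lia.
by rewrite !bin0n; case: b lt_nb.
Qed.

Lemma coef_eq0 n b : (3 <= n)%N -> (n < 2 * b)%N -> coef n b = 0%N.
Proof. by case: b => [|b] n_ge3 lt_n2b; rewrite /coef !bin_small //; lia. Qed.

Local Open Scope ring_scope.

Lemma sum_nat_cut (R : zmodType) N M (F : nat -> R) : (N <= M)%N ->
  (forall b, (N <= b < M)%N -> F b = 0) -> \sum_(0 <= b < M) F b = \sum_(0 <= b < N) F b.
Proof.
move=> le_NM F0; rewrite (big_cat_nat (leq0n N) le_NM) /= [X in _ + X]big_nat_cond.
by rewrite [X in _ + X]big1 ?addr0 // => b /andP[bNM _]; apply: F0.
Qed.

Lemma P_countE k n j l : (1 < k)%N -> (j < n)%N || (j == 0)%N -> forall M, (j.+2 <= M)%N ->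
  (P_count k n j l)%:Z =
  \sum_(0 <= b < M) (-1) ^+ b * ('C(j.+1 - b, b))%:Z * (f_count k (n - 2 * b) l)%:Z.
Proof.
move=> k_gt1; elim/ltn_ind: j n => -[|j] IH n jn [|M] le_jM //.
  rewrite big_nat_recl // big1 => [|b _]; last by rewrite bin0n mulr0 mul0r.
  by rewrite P_count0 bin0 subn0 mul1r addr0.
have lt_jn : (j.+1 < n)%N by rewrite orbF in jn.
have -> : (P_count k n j.+1 l)%:Z = (P_count k n j l)%:Z - (P_count k (n - 2) j.-1 l)%:Z.
  by rewrite (P_count_rec l k_gt1 lt_jn) PoszD addrK.
rewrite (IH j _ n _ M.+1) ?(IH j.-1 _ (n - 2)%N _ M); [|lia..].
rewrite !big_nat_recl // !expr0 !subn0 !bin0 !mul1r -addrA; congr (_ + _).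
rewrite -sumrB; apply: eq_bigr => b _.
have -> : 'C(j.-1.+1 - b, b) = 'C(j - b, b) by case: j {IH jn lt_jn le_jM} => [|j] //; case: b.
rewrite !subSS binS_sub PoszD (_ : n - 2 * b.+1 = n - 2 - 2 * b)%N; last by lia.
by rewrite exprS; ring.
Qed.

Lemma ScE k n l : (1 < k)%N -> (3 <= n)%N ->
  (Sc k n l)%:Z = \sum_(0 <= b < n.+1) (-1) ^+ b * (coef n b)%:Z * (f_count k (n - 2 * b) l)%:Z.
Proof.
case: n => [|[|m]] // k_gt1 m_gt0.
have -> : (Sc k m.+2 l)%:Z = (P_count k m.+2 m.+1 l)%:Z - (P_count k m m.-1 l)%:Z.
  by rewrite -(Sc_rec l k_gt1 m_gt0) PoszD addrK.
rewrite (P_countE l k_gt1 (n := m.+2) (j := m.+1) _ (leqnn _)) ?ltnSn //.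
rewrite (P_countE l k_gt1 (n := m) (j := m.-1) _ (M := m.+2)); [|lia..].
rewrite [RHS]big_nat_recl // [in LHS]big_nat_recl // !expr0 !subn0 !bin0 !mul1r /coef /=.
rewrite -addrA; congr (_ + _); rewrite -sumrB; apply: eq_bigr => b _.
rewrite (_ : m.+2 - 2 * b.+1 = m - 2 * b)%N; last by lia.
by rewrite !subSS subn0 (prednK m_gt0) PoszD exprS; ring.
Qed.

Theorem theorem3p5 (k n : nat) (hk : (2 <= k)%N) (hn : (3 <= n)%N) :
  (forall l : nat,
     (Sc k n l)%:Z =
     \sum_(0 <= b < ((n - l)./2).+1)
        (-1) ^+ b * (coef n b)%:Z * (f_count k (n - 2 * b) l)%:Z) /\
  (Sc_total k n)%:Z =
     \sum_(0 <= b < (n./2).+1)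
        (-1) ^+ b * (coef n b)%:Z *
        (\sum_(0 <= l < (n - 2 * b).+1) f_count k (n - 2 * b) l)%:Z.
Proof.
have vanish b l : ((n - l)./2 < b)%N ->
    (-1) ^+ b * (coef n b)%:Z * (f_count k (n - 2 * b) l)%:Z = 0.
  rewrite -divn2 => lt_b; have [lt_n2b | le_2bn] := ltnP n (2 * b).
    by rewrite coef_eq0 // mulr0 mul0r.
  by rewrite f_count_gt ?mulr0 //; lia.
split=> [l|].
  rewrite ScE // (sum_nat_cut (N := ((n - l)./2).+1)) => [//||b /andP[lt_b _]]; last exact: vanish.
  by rewrite -divn2; lia.
rewrite /Sc_total (big_morph Posz PoszD (erefl _)).
rewrite (eq_bigr _ (fun (l : 'I_n.+1) _ => ScE l hk hn)) exchange_big /=.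
rewrite (sum_nat_cut (N := (n./2).+1)) => [||b /andP[lt_b _]]; first last.
- rewrite big1 // => l _; apply: vanish; rewrite -divn2 in lt_b *; lia.
- by rewrite -divn2; lia.
apply: eq_bigr => b _; rewrite -mulr_sumr (big_morph Posz PoszD (erefl _)); congr (_ * _).
rewrite -(big_mkord xpredT (fun l => (f_count k (n - 2 * b) l)%:Z)).
by rewrite (sum_nat_cut (N := (n - 2 * b).+1)) // => [|l /andP[lt_l _]]; [lia | rewrite f_count_gt].
Qed.
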